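(* Let $A\in\mathbb{C}^{n\times n}$, and fix $A^-\in A\{1\}$ and $A^{GD}\in A\{GD\}$. For $X\in\mathbb{C}^{n\times n}$ the following are equivalent: (i) $X = A^{-}AA^{GD}$; (ii) $XA=A^{-}A$ and $N(X)=N(AA^{GD})$; (iii) $XAA^{-}=A^{-}AA^{-}$ and $N(X)=N(AA^{GD})$.
   Context: For $A\in\mathbb{C}^{n\times n}$, $ind(A)$ is the smallest nonnegative integer $k$ with $\mathrm{rank}(A^k)=\mathrm{rank}(A^{k+1})$. $A\{1\}$ is the set of matrices $X$ with $AXA=A$. With $k=ind(A)$, $A\{GD\}$ is the set of G-Drazin inverses of $A$: matrices $X$ with $AXA=A$, $XA^{k+1}=A^k$, $A^{k+1}X=A^k$. $N(\cdot)$ denotes null space. *)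

From HB Require Import structures.
From mathcomp Require Import all_boot all_algebra.
From mathcomp Require Import complex.
From mathcomp Require Import reals.
Set Implicit Arguments. Unset Strict Implicit. Unset Printing Implicit Defensive.
Import GRing.Theory.
Local Open Scope ring_scope.

(* Complex n x n matrices are 'M[R[i]]_n with R : realType (R[i] = C). *)

Definition is_index {F : fieldType} {n : nat} (A : 'M[F]_n) (k : nat) : Prop :=
  \rank (A ^+ k) = \rank (A ^+ k.+1) /\
  (forall j : nat, (j < k)%N -> \rank (A ^+ j) <> \rank (A ^+ j.+1)).

Definition inner_inverse {F : fieldType} {n : nat} (A X : 'M[F]_n) : Prop :=
  A *m X *m A = A.

Definition GD_inverse {F : fieldType} {n : nat} (k : nat) (A X : 'M[F]_n) : Prop :=
  A *m X *m A = A /\ X *m A ^+ k.+1 = A ^+ k /\ A ^+ k.+1 *m X = A ^+ k.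

Definition nullsp {F : fieldType} {n : nat} (M : 'M[F]_n) : 'cV[F]_n -> Prop :=
  fun v => M *m v = 0.

Definition same_nullsp {F : fieldType} {n : nat} (M N : 'M[F]_n) : Prop :=
  forall v : 'cV[F]_n, nullsp M v <-> nullsp N v.

From HB Require Import structures.
From mathcomp Require Import all_boot all_algebra.
From mathcomp Require Import complex.
From mathcomp Require Import reals.
Local Open Scope ring_scope.
Import GRing.Theory.

(* Since A A^GD A = A, the matrix P = A A^GD is idempotent, so N(X) = N(P)
   forces X (1 - P) = 0, i.e. X = X P = X A A^GD; with X A = A^- A this gives
   X = A^- A A^GD. Conversely A A^- acts as the identity on the range of A,
   so A^- A A^GD and A A^GD have the same null space. Only the inner-inverse
   property of A^GD is needed: the index and the Drazin-type equations play
   no role. *)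

Section NullSpaces.

Context {F : fieldType}.

Lemma mulmx_cV_eq0 (m n : nat) (M : 'M[F]_(m, n)) :
  (forall v : 'cV[F]_n, M *m v = 0) -> M = 0.
Proof.
move=> Mv0; apply/matrixP => i j.
have := Mv0 (delta_mx j 0); rewrite -colE => /matrixP/(_ i 0).
by rewrite !mxE.
Qed.

Context {n : nat}.
Implicit Types A B C M P X : 'M[F]_n.

Lemma inner_inverse_mulmx_idem [A G] :
  inner_inverse A G -> A *m G *m (A *m G) = A *m G.
Proof. by move=> AGA; rewrite mulmxA AGA. Qed.

Lemma same_nullsp_mulmxl [B C M] :
  C *m B *m M = M -> same_nullsp (B *m M) M.
Proof.
move=> CBM v; rewrite /nullsp; split => [BMv0 | Mv0].
  by rewrite -CBM -!mulmxA (mulmxA B) BMv0 !mulmx0.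
by rewrite -mulmxA Mv0 mulmx0.
Qed.

Lemma same_nullsp_idem_mulmx [X P] :
  P *m P = P -> same_nullsp X P -> X *m P = X.
Proof.
move=> PP XP; apply/eqP; rewrite -subr_eq0 -[X in _ - X]mulmx1 -mulmxBr.
apply/eqP/mulmx_cV_eq0 => v; rewrite -mulmxA; apply/XP.
by rewrite /nullsp mulmxA mulmxBr mulmx1 PP subrr mul0mx.
Qed.

End NullSpaces.

Theorem theorem3p6 (R : realType) (n : nat) (A Am Agd X : 'M[R[i]]_n) (k : nat) :
  is_index A k ->
  inner_inverse A Am ->
  GD_inverse k A Agd ->
  [<-> X = Am *m A *m Agd;
       X *m A = Am *m A /\ same_nullsp X (A *m Agd);
       X *m A *m Am = Am *m A *m Am /\ same_nullsp X (A *m Agd)].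
Proof.
move=> _ AAmA [AAgdA _].
have AAgd_idem := inner_inverse_mulmx_idem AAgdA.
tfae.
- move=> ->; split.
    by rewrite -!mulmxA (mulmxA A) AAgdA.
  by rewrite -mulmxA; apply: (same_nullsp_mulmxl (C := A)); rewrite mulmxA AAmA.
- by case=> XA XN; rewrite XA.
- case=> XAAm XN.
  have XA : X *m A = Am *m A.
    by rewrite -[in LHS]AAmA !mulmxA XAAm -!mulmxA (mulmxA A) AAmA.
  by rewrite -(same_nullsp_idem_mulmx AAgd_idem XN) mulmxA XA.
Qed.
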